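(* Let $(M,\mathcal T)$ be a closed pseudo 3-manifold which admits a zero-curvature generalized decorated metric. Let $l_0\in\mathbb R^E$ and write $l_0=w+l_0^\top$ with $w\in\mathbb R^V$ and $l_0^\top$ the orthogonal projection of $l_0$ to $\mathbb R^E/\widehat{\mathbb R^V}$. Then the solution $l(t)$ of the extended Ricci flow $\frac{d}{dt}l(t)=\widetilde K(l(t))$ with $l(0)=l_0$ satisfies $l(t)=w+l^\top(t)$ for all $t\in[0,\infty)$, where $l^\top(t)$ is the solution of the extended Ricci flow with initial data $l_0^\top$. Moreover, $l^\top(t)\in\mathbb R^E/\widehat{\mathbb R^V}$ for all $t\in[0,\infty)$.
   Context: Closed pseudo 3-manifold $(M,\mathcal T)$: quotient of a disjoint union $\mathscr T$ of finitely many tetrahedra by affine isomorphisms pairing faces, every 2-face being paired with another; $V,E$ are the sets of vertex and edge classes. For a tetrahedron $\sigma$ with vertices $v_1,\dots,v_4$ and $l\in\mathbb R^E$, $l_\sigma=(l_{ij})\in\mathbb R^6$, $l_{ij}=l(\text{class of } v_iv_j)$. Extended dihedral angles: for $(x_1,x_2,x_3)\in\mathbb R^3_{>0}$, $a_i$ is the Euclidean angle opposite $x_i$ if strict triangle inequalities hold, and $a_i=\pi$, $a_j=a_k=0$ if $x_i\ge x_j+x_k$. For $l\in\mathbb R^6$, $\{i,j,k,h\}=\{1,2,3,4\}$, $\alpha_{ij}(l)$ is the generalized angle opposite the side $e^{(l_{ij}+l_{kh})/2}$ in the generalized triangle with sides $e^{(l_{ij}+l_{kh})/2},e^{(l_{ik}+l_{jh})/2},e^{(l_{ih}+l_{jk})/2}$.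 A generalized decorated metric is any $l\in\mathbb R^E$; its generalized Ricci curvature is $\widetilde K_e(l)=2\pi-\sum\alpha_{ij}(l_\sigma)$ over pairs (tetrahedron $\sigma$, edge $v_iv_j$ of $\sigma$ in class $e$); it is zero-curvature if $\widetilde K(l)=0$. $\mathbb R^V$ acts on $\mathbb R^E$ by $(w+l)_e=l_e+w(e_+)+w(e_-)$ with $e_\pm$ the endpoints of $e$; $\widehat{\mathbb R^V}=\{w+0:w\in\mathbb R^V\}$ and $\mathbb R^E/\widehat{\mathbb R^V}$ denotes its orthogonal complement in $\mathbb R^E$ (standard inner product). *)

From HB Require Import structures.
From mathcomp Require Import all_boot all_order all_algebra all_fingroup.
From mathcomp Require Import all_classical all_reals all_analysis.
From Stdlib Require Import Relations.
Set Implicit Arguments. Unset Strict Implicit. Unset Printing Implicit Defensive.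
Import Order.TTheory GRing.Theory Num.Theory.
Import numFieldNormedType.Exports.
Local Open Scope classical_set_scope.
Local Open Scope ring_scope.

(*   T : finite type of tetrahedra; vertices of each tetrahedron are 'I_4. *)
(*   glue s k = (t, p) : the face of s opposite vertex k is glued to the   *)
(*     face of t opposite vertex p k, vertex i (i <> k) of s being sent    *)
(*     to vertex p i of t (an affine isomorphism of faces).                *)
(*   vcl s i : vertex class in V of vertex i of s.                         *)
(*   ecl s i j : edge class in E of edge v_i v_j of s (i <> j).            *)
(*   eend e : the (unordered) pair of endpoints e_-, e_+ of e.             *)

Section Pseudo.
Variables (T V E : finType).
Variable glue : T -> 'I_4 -> (T * {perm 'I_4})%type.
Variable vcl : T -> 'I_4 -> V.
Variable ecl : T -> 'I_4 -> 'I_4 -> E.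
Variable eend : E -> (V * V)%type.

Definition vglued (x y : (T * 'I_4)%type) : Prop :=
  exists k : 'I_4, x.2 <> k /\ (glue x.1 k).1 = y.1 /\ (glue x.1 k).2 x.2 = y.2.

(* elementary identification of (oriented) edges: reversal or face gluing *)
Definition eglued (x y : (T * 'I_4 * 'I_4)%type) : Prop :=
  (y = (x.1.1, x.2, x.1.2)) \/
  exists k : 'I_4, x.1.2 <> k /\ x.2 <> k /\ (glue x.1.1 k).1 = y.1.1 /\
    (glue x.1.1 k).2 x.1.2 = y.1.2 /\ (glue x.1.1 k).2 x.2 = y.2.

Definition closed_pseudo3 : Prop :=
  (* every 2-face is paired with another 2-face, the pairing is an involution *)
  (forall (s : T) (k : 'I_4),
      ((glue s k).1, (glue s k).2 k) <> (s, k) /\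
      glue (glue s k).1 ((glue s k).2 k) = (s, ((glue s k).2)^-1%g)) /\
  (* V is the set of vertex classes of the quotient *)
  (forall v : V, exists s i, vcl s i = v) /\
  (forall x y : T * 'I_4,
      vcl x.1 x.2 = vcl y.1 y.2 <-> clos_refl_sym_trans _ vglued x y) /\
  (* E is the set of edge classes of the quotient *)
  (forall e : E, exists s i j, i <> j /\ ecl s i j = e) /\
  (forall x y : T * 'I_4 * 'I_4, x.1.2 <> x.2 -> y.1.2 <> y.2 ->
      (ecl x.1.1 x.1.2 x.2 = ecl y.1.1 y.1.2 y.2 <->
       clos_refl_sym_trans _ eglued x y)) /\
  (forall s i j, i <> j ->
      eend (ecl s i j) = (vcl s i, vcl s j) \/
      eend (ecl s i j) = (vcl s j, vcl s i)).

End Pseudo.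

Section Angles.
Variable R : realType.

(* generalized angle opposite x1 in the generalized triangle (x1,x2,x3) *)
Definition ext_angle (x1 x2 x3 : R) : R :=
  if x2 + x3 <= x1 then pi
  else if (x1 + x3 <= x2) || (x1 + x2 <= x3) then 0
  else acos ((x2 ^+ 2 + x3 ^+ 2 - x1 ^+ 2) / (2 * x2 * x3)).

Definition oth (i j : 'I_4) : seq 'I_4 := [seq k <- enum 'I_4 | (k != i) && (k != j)].
Definition oth1 (i j : 'I_4) : 'I_4 := nth ord0 (oth i j) 0.
Definition oth2 (i j : 'I_4) : 'I_4 := nth ord0 (oth i j) 1.

Definition alpha (T E : finType) (ecl : T -> 'I_4 -> 'I_4 -> E)
    (l : E -> R) (s : T) (i j : 'I_4) : R :=
  let k := oth1 i j in let h := oth2 i j in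
  let L a b := l (ecl s a b) in
  ext_angle (expR ((L i j + L k h) / 2)) (expR ((L i k + L j h) / 2))
            (expR ((L i h + L j k) / 2)).

Definition gcurv (T E : finType) (ecl : T -> 'I_4 -> 'I_4 -> E)
    (l : E -> R) (e : E) : R :=
  2 * pi - \sum_(s : T) \sum_(i : 'I_4) \sum_(j : 'I_4 | (i < j)%N && (ecl s i j == e))
             alpha ecl l s i j.

Definition vact (V E : finType) (eend : E -> (V * V)%type) (w : V -> R) (l : E -> R) : E -> R :=
  fun e => l e + w (eend e).1 + w (eend e).2.

(* l lies in R^E / hat(R^V), the orthogonal complement of {w + 0} *)
Definition in_quot (V E : finType) (eend : E -> (V * V)%type) (l : E -> R) : Prop :=
  forall w : V -> R, \sum_(e : E) l e * vact eend w (fun _ => 0) e = 0.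

Definition ext_ricci_sol (T E : finType) (ecl : T -> 'I_4 -> 'I_4 -> E)
    (l : R -> E -> R) (l0 : E -> R) : Prop :=
  l 0 = l0 /\
  (forall (e : E) (t : R), 0 < t ->
      is_derive t 1 (fun s => l s e) (gcurv ecl (l t) e)) /\
  (forall e : E, (fun s => l s e) @ (0:R)^'+ --> l 0 e).

End Angles.

From HB Require Import structures.
From mathcomp Require Import all_boot all_order all_algebra all_fingroup.
From mathcomp Require Import all_classical all_reals all_analysis.
From mathcomp Require Import ring lra.
From Stdlib Require Import Relations.
Set Implicit Arguments. Unset Strict Implicit. Unset Printing Implicit Defensive.
Import Order.TTheory GRing.Theory Num.Theory.
Import numFieldNormedType.Exports.
Local Open Scope ring_scope.

(* The action of w on R^E multiplies the three sides of the generalized triangle of a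
   tetrahedron by one common factor, so the generalized angles, hence K~, are invariant
   under R^V and w + l^T(t) solves the flow started at w + l^T(0).  Opposite edges of a
   tetrahedron carry the same angle and the three angles of a generalized triangle sum
   to pi, so <K~(l), w + 0> = sum_e 2 pi (w + 0)_e - pi sum_sigma sum_(v in sigma) w(v)
   does not depend on l.  It vanishes at a zero-curvature metric, hence everywhere, so
   <l(t), w + 0> is constant along the flow. *)

Section TriangleAngles.
Variable R : realType.
Implicit Types a b c p q r x y z : R.

Lemma cos_rule_itv a b c : 0 < a -> 0 < b -> 0 < c ->
  a < b + c -> b < a + c -> c < a + b ->
  -1 <= (b ^+ 2 + c ^+ 2 - a ^+ 2) / (2 * b * c) <= 1.
Proof.
move=> a0 b0 c0 abc bac cab; have bc0 : 0 < 2 * b * c by rewrite !mulr_gt0.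
apply/andP; split.
  rewrite ler_pdivlMr // -subr_ge0.
  have -> : b ^+ 2 + c ^+ 2 - a ^+ 2 - -1 * (2 * b * c) = (b + c - a) * (b + c + a)
    by ring.
  by apply/ltW/mulr_gt0; lra.
rewrite ler_pdivrMr // -subr_ge0.
have -> : 1 * (2 * b * c) - (b ^+ 2 + c ^+ 2 - a ^+ 2) = (a - b + c) * (a + b - c)
  by ring.
by apply/ltW/mulr_gt0; lra.
Qed.

Lemma acos_sum_eq_pi p q r : -1 <= p <= 1 -> -1 <= q <= 1 -> -1 <= r <= 1 ->
  - p <= q -> Num.sqrt (1 - p ^+ 2) * Num.sqrt (1 - q ^+ 2) = r + p * q ->
  acos p + acos q + acos r = pi.
Proof.
move=> p1 q1 r1 pq sqrt_pq.
have Np1 : -1 <= - p <= 1 by apply/andP; split; lra.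
(* acos is decreasing and acos (- p) = pi - acos p *)
have pq_le_pi : acos q <= pi - acos p.
  rewrite -acosN // leNgt -ltr_cos ?in_itv /= ?acos_ge0 ?acos_lepi //.
  by rewrite !acosK ?in_itv //= -leNgt.
have cos_pq : cos (pi - (acos p + acos q)) = r.
  by rewrite addrC cosDpi cosN cosD !acosK ?in_itv //= !sin_acos // sqrt_pq; ring.
have := acos_ge0 p1; have := acos_ge0 q1 => q0 p0.
by rewrite -cos_pq cosK ?in_itv /=; [ring | apply/andP; split; lra].
Qed.

Lemma cos_rule_acos_sum a b c : 0 < a -> 0 < b -> 0 < c ->
  a < b + c -> b < a + c -> c < a + b ->
  acos ((b ^+ 2 + c ^+ 2 - a ^+ 2) / (2 * b * c)) +
  acos ((a ^+ 2 + c ^+ 2 - b ^+ 2) / (2 * a * c)) +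
  acos ((a ^+ 2 + b ^+ 2 - c ^+ 2) / (2 * a * b)) = pi.
Proof.
move=> a0 b0 c0 abc bac cab.
have an : a != 0 by rewrite gt_eqF.
have bn : b != 0 by rewrite gt_eqF.
have cn : c != 0 by rewrite gt_eqF.
have p1 := cos_rule_itv a0 b0 c0 abc bac cab.
have q1 : -1 <= (a ^+ 2 + c ^+ 2 - b ^+ 2) / (2 * a * c) <= 1.
  by apply: cos_rule_itv => //; lra.
have r1 : -1 <= (a ^+ 2 + b ^+ 2 - c ^+ 2) / (2 * a * b) <= 1.
  by apply: cos_rule_itv => //; lra.
apply: acos_sum_eq_pi => //.
  rewrite -subr_ge0 opprK.
  have -> : (a ^+ 2 + c ^+ 2 - b ^+ 2) / (2 * a * c) +
             (b ^+ 2 + c ^+ 2 - a ^+ 2) / (2 * b * c) =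
           (a + b) * (c - a + b) * (c + a - b) / (2 * a * b * c)
    by field; rewrite ?an ?bn ?cn.
  by apply/ltW/divr_gt0; rewrite !mulr_gt0 //; lra.
set p := _ / (2 * b * c) in p1 *; set q := _ / (2 * a * c) in q1 *.
set r := _ / (2 * a * b) in r1 *.
(* r + p q = sin A sin B = 4 area^2 / (a b c^2), by Heron's formula *)
have heron : r + p * q =
    (a + b + c) * (b + c - a) * (a + c - b) * (a + b - c) / (4 * a * b * c ^+ 2)
  by rewrite /r /p /q; field; rewrite ?an ?bn ?cn.
have rpq0 : 0 <= r + p * q.
  rewrite heron; apply/ltW/divr_gt0; last by rewrite !mulr_gt0 // exprn_gt0.
  by rewrite !mulr_gt0 //; lra.
have p2 : 0 <= 1 - p ^+ 2.
  by rewrite subr_ge0 -ler_sqrt ?sqr_ge0 // sqrtr_sqr sqrtr1 ler_norml.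
rewrite -sqrtrM // (_ : (1 - p ^+ 2) * (1 - q ^+ 2) = (r + p * q) ^+ 2).
  by rewrite sqrtr_sqr ger0_norm.
by rewrite /r /p /q; field; rewrite ?an ?bn ?cn.
Qed.

Lemma ext_angleZ x y z c : 0 < c -> 0 < y -> 0 < z ->
  ext_angle (x * c) (y * c) (z * c) = ext_angle x y z.
Proof.
move=> c0 y0 z0; rewrite /ext_angle -!mulrDl !ler_pM2r //.
have [cn yn zn] : [/\ c != 0, y != 0 & z != 0] by rewrite !gt_eqF.
rewrite (_ : _ / (2 * (y * c) * (z * c)) = (y ^+ 2 + z ^+ 2 - x ^+ 2) / (2 * y * z)) //.
by field; rewrite ?cn ?yn ?zn.
Qed.

Lemma ext_angle_sum x y z : 0 < x -> 0 < y -> 0 < z ->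
  ext_angle x y z + ext_angle y x z + ext_angle z x y = pi.
Proof.
move=> x0 y0 z0; rewrite /ext_angle [y + x]addrC [z + y]addrC [z + x]addrC.
case: (leP (y + z) x) => yzx.
  by rewrite (@lt_geF _ _ y) 1?(@lt_geF _ _ z) ?addr0 //; lra.
case: (leP (x + z) y) => xzy.
  by rewrite (@lt_geF _ _ z) ?add0r ?addr0 //; lra.
case: (leP (x + y) z) => xyz; first by rewrite !add0r.
exact: cos_rule_acos_sum.
Qed.

End TriangleAngles.

Definition o0 : 'I_4 := ord0.
Definition o1 : 'I_4 := lift ord0 (ord0 : 'I_3).
Definition o2 : 'I_4 := lift ord0 (lift ord0 (ord0 : 'I_2)).
Definition o3 : 'I_4 := lift ord0 (lift ord0 (lift ord0 (ord0 : 'I_1))).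

Lemma enum_ord4 : enum 'I_4 = [:: o0; o1; o2; o3].
Proof. by apply: (inj_map val_inj); rewrite val_enum_ord. Qed.

Lemma oth_neq (i j : 'I_4) : i != j ->
  [&& oth1 i j != i, oth1 i j != j, oth2 i j != i, oth2 i j != j & oth1 i j != oth2 i j].
Proof.
rewrite /oth1 /oth2 /oth enum_ord4.
by case: i j => [[|[|[|[|//]]]] ?] [[|[|[|[|//]]]] ?]; vm_compute.
Qed.

Lemma oth_ord4 :
  [/\ (oth1 o0 o1, oth2 o0 o1) = (o2, o3), (oth1 o0 o2, oth2 o0 o2) = (o1, o3)
    & (oth1 o0 o3, oth2 o0 o3) = (o1, o2)] /\
  [/\ (oth1 o1 o2, oth2 o1 o2) = (o0, o3), (oth1 o1 o3, oth2 o1 o3) = (o0, o2)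
    & (oth1 o2 o3, oth2 o2 o3) = (o0, o1)].
Proof. by rewrite /oth1 /oth2 /oth enum_ord4. Qed.

Lemma sum_ltn_pairs4 (R : nmodType) (F : 'I_4 -> 'I_4 -> R) :
  \sum_(i : 'I_4) \sum_(j : 'I_4 | (i < j)%N) F i j =
  F o0 o1 + F o0 o2 + F o0 o3 + F o1 o2 + F o1 o3 + F o2 o3.
Proof.
under eq_bigr do rewrite big_mkcond.
by rewrite !big_ord_recl !big_ord0 /= !addr0 !add0r !addrA.
Qed.

Lemma sum_partition_mull (R : pzSemiRingType) (I E : finType) (P : pred I)
    (g : I -> E) (G : I -> R) (F : E -> R) :
  \sum_(e : E) (\sum_(x | P x && (g x == e)) G x) * F e = \sum_(x | P x) G x * F (g x).
Proof.
rewrite (partition_big g predT) //=; apply: eq_bigr => e _.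
by rewrite mulr_suml; apply: eq_bigr => x /andP[_ /eqP ->].
Qed.

Section VertexScaling.
Variables (R : realType) (T V E : finType).
Variables (vcl : T -> 'I_4 -> V) (ecl : T -> 'I_4 -> 'I_4 -> E) (eend : E -> (V * V)%type).
Hypothesis ecl_sym : forall s i j, ecl s i j = ecl s j i.
Hypothesis eend_ecl : forall s i j, i <> j ->
  eend (ecl s i j) = (vcl s i, vcl s j) \/ eend (ecl s i j) = (vcl s j, vcl s i).
Implicit Types (w : V -> R) (l : E -> R).

Lemma vactK w : cancel (vact eend w) (vact eend (fun v => - w v)).
Proof. by move=> l; apply/funext => e; rewrite /vact; ring. Qed.

Lemma vactNK w : cancel (vact eend (fun v => - w v)) (vact eend w).
Proof. by move=> l; apply/funext => e; rewrite /vact; ring. Qed.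

Lemma vact_ecl w l s i j : i != j ->
  vact eend w l (ecl s i j) = l (ecl s i j) + w (vcl s i) + w (vcl s j).
Proof.
by move=> /eqP ij; rewrite /vact; case: (eend_ecl s ij) => -> //=; rewrite addrAC.
Qed.

Lemma alpha_vact w l s i j : i != j -> alpha ecl (vact eend w l) s i j = alpha ecl l s i j.
Proof.
move=> ij; have /and5P[ki kj hi hj kh] := oth_neq ij; rewrite /alpha.
set k := oth1 i j in ki kj kh *; set h := oth2 i j in hi hj kh *.
have splitE (X Y u v u' v' : R) : expR ((X + u + v + (Y + u' + v')) / 2) =
    expR ((X + Y) / 2) * expR ((u + v + u' + v') / 2).
  by rewrite -expRD; congr expR; ring.
rewrite !vact_ecl // 1?eq_sym // !splitE.
set wi := w (vcl s i); set wj := w (vcl s j); set wk := w (vcl s k); set wh := w (vcl s h).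
(* all three sides are scaled by the same factor expR ((wi + wj + wk + wh) / 2) *)
have -> : wi + wk + wj + wh = wi + wj + wk + wh by ring.
have -> : wi + wh + wj + wk = wi + wj + wk + wh by ring.
by rewrite ext_angleZ ?expR_gt0.
Qed.

Lemma gcurv_vact w l : gcurv ecl (vact eend w l) =1 gcurv ecl l.
Proof.
move=> e; rewrite /gcurv; congr (_ - _).
apply: eq_bigr => s _; apply: eq_bigr => i _; apply: eq_bigr => j /andP[ij _].
by rewrite alpha_vact // neq_ltn ij.
Qed.

Lemma ext_ricci_sol_vact w (l : R -> E -> R) l0 :
  ext_ricci_sol ecl l l0 -> ext_ricci_sol ecl (fun t => vact eend w (l t)) (vact eend w l0).
Proof.
case=> l_0 [l_derive l_cont]; split; first by rewrite l_0.
split=> [e t t0|e]; rewrite /vact.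
  have -> : (fun s => l s e + w (eend e).1 + w (eend e).2) =
      (fun s => l s e) + cst (w (eend e).1 + w (eend e).2).
    by apply/funext => x /=; rewrite addrA.
  by rewrite gcurv_vact -[gcurv _ _ _]addr0; apply: is_deriveD; exact: l_derive.
by apply: cvgD; [apply: cvgD; [exact: l_cont | exact: cvg_cst] | exact: cvg_cst].
Qed.

(* opposite edges of a tetrahedron carry the same angle, and the three angles sum to pi *)
Lemma sum_alpha_mulD l s (u : 'I_4 -> R) :
  \sum_(i : 'I_4) \sum_(j : 'I_4 | (i < j)%N) alpha ecl l s i j * (u i + u j) =
  pi * \sum_(i : 'I_4) u i.
Proof.
have [[h01 h02 h03] [h12 h13 h23]] := oth_ord4.
rewrite sum_ltn_pairs4 /alpha.
case: h01 => -> ->; case: h02 => -> ->; case: h03 => -> ->.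
case: h12 => -> ->; case: h13 => -> ->; case: h23 => -> ->.
rewrite (ecl_sym s o1 o0) (ecl_sym s o2 o0) (ecl_sym s o3 o0).
rewrite (ecl_sym s o2 o1) (ecl_sym s o3 o1) (ecl_sym s o3 o2).
set L01 := l (ecl s o0 o1); set L02 := l (ecl s o0 o2); set L03 := l (ecl s o0 o3).
set L12 := l (ecl s o1 o2); set L13 := l (ecl s o1 o3); set L23 := l (ecl s o2 o3).
rewrite (addrC L12 L03) (addrC L13 L02) (addrC L23 L01).
set a := expR ((L01 + L23) / 2); set b := expR ((L02 + L13) / 2).
set c := expR ((L03 + L12) / 2).
rewrite -(@ext_angle_sum R a b c) ?expR_gt0 //.
by rewrite !big_ord_recl big_ord0 /o0 /o1 /o2 /o3; ring.
Qed.

Lemma gcurv_dot_vact0 w l :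
  \sum_(e : E) gcurv ecl l e * vact eend w (fun=> 0) e =
  \sum_(e : E) 2 * pi * vact eend w (fun=> 0) e -
  pi * \sum_(s : T) \sum_(i : 'I_4) w (vcl s i).
Proof.
rewrite /gcurv; under eq_bigr do rewrite mulrBl.
rewrite sumrB mulr_sumr; congr (_ - _).
under eq_bigr do rewrite !mulr_suml.
rewrite exchange_big /=; apply: eq_bigr => s _.
under eq_bigr do rewrite mulr_suml.
rewrite exchange_big /=; under eq_bigr => i _ do rewrite sum_partition_mull.
rewrite -(sum_alpha_mulD l s (fun i => w (vcl s i))).
apply: eq_bigr => i _; apply: eq_bigr => j ij.
by rewrite vact_ecl ?add0r // neq_ltn ij.
Qed.

Lemma gcurv_in_quot : (exists lz : E -> R, forall e, gcurv ecl lz e = 0) ->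
  forall l, in_quot eend (gcurv ecl l).
Proof.
move=> [lz lz0] l w; rewrite gcurv_dot_vact0 -(gcurv_dot_vact0 w lz).
by rewrite big1 // => e _; rewrite lz0 mul0r.
Qed.

End VertexScaling.

Section FlowInvariants.
Local Open Scope classical_set_scope.
Variable R : realType.

Lemma is_derive_sum_fintype (I : finType) (F : I -> R -> R) (dF : I -> R) (x : R) :
  (forall i, is_derive x 1 (F i) (dF i)) ->
  is_derive x 1 (fun s => \sum_i F i s) (\sum_i dF i).
Proof.
move=> F_derive; rewrite -fct_sumE.
by elim/big_ind2 : _ => // [|f df g dg ? ?]; [exact: is_derive_cst | exact: is_deriveD].
Qed.

Lemma derive0_cst_ge0 (f : R -> R) :
  (forall t : R, 0 < t -> is_derive t 1 f 0) -> f @ 0^'+ --> f 0 ->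
  forall t : R, 0 <= t -> f t = f 0.
Proof.
move=> f_derive f_cont t; rewrite le_eqVlt => /orP[/eqP <- // | t0].
have f_cont0t : {within `[0, t], continuous f}.
  apply/continuous_within_itvP => //; split.
  - move=> x /[!in_itv] /andP[x0 _].
    by apply/differentiable_continuous/derivable1_diffP; case: (f_derive x x0).
  - exact: f_cont.
  - apply: cvg_at_left_filter.
    by apply/differentiable_continuous/derivable1_diffP; case: (f_derive t t0).
have f_derive0t x : x \in `]0, t[%R -> is_derive x 1 f 0.
  by rewrite in_itv /= => /andP[x0 _]; exact: f_derive.
have [x _] := MVT t0 f_derive0t f_cont0t.
by rewrite mul0r => /eqP; rewrite subr_eq0 => /eqP.
Qed.

Variables (T E : finType) (ecl : T -> 'I_4 -> 'I_4 -> E).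

Lemma ext_ricci_sol_dot_cst (c : E -> R) (l : R -> E -> R) (l0 : E -> R) :
  (forall l', \sum_e gcurv ecl l' e * c e = 0) -> ext_ricci_sol ecl l l0 ->
  forall t : R, 0 <= t -> \sum_e l t e * c e = \sum_e l0 e * c e.
Proof.
move=> gcurv_c [l_0 [l_derive l_cont]]; rewrite -l_0.
apply: (derive0_cst_ge0 (f := fun t => \sum_e l t e * c e)) => [t t0|].
  rewrite -[X in is_derive _ _ _ X](gcurv_c (l t)); apply: is_derive_sum_fintype => e.
  rewrite (_ : (fun s => l s e * c e) = c e *: (fun s => l s e)); last first.
    by apply/funext => s /=; rewrite mulrC.
  by rewrite mulrC; apply: is_deriveZ; exact: l_derive.
apply: cvg_big => [|e _]; first exact: add_continuous.
by apply: cvgM; [exact: l_cont | exact: cvg_cst].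
Qed.

Lemma ext_ricci_sol_in_quot (V : finType) (eend : E -> (V * V)%type)
    (l : R -> E -> R) (l0 : E -> R) :
  (forall l' : E -> R, in_quot eend (gcurv ecl l')) -> in_quot eend l0 ->
  ext_ricci_sol ecl l l0 ->
  forall t : R, 0 <= t -> in_quot eend (l t).
Proof.
move=> gcurv_quot l0_quot l_sol t t0 w.
by rewrite (ext_ricci_sol_dot_cst (gcurv_quot^~ w) l_sol t0); exact: l0_quot.
Qed.

End FlowInvariants.

Section ClosedPseudo3.
Variables (T V E : finType) (glue : T -> 'I_4 -> (T * {perm 'I_4})%type).
Variables (vcl : T -> 'I_4 -> V) (ecl : T -> 'I_4 -> 'I_4 -> E) (eend : E -> (V * V)%type).
Hypothesis HM : closed_pseudo3 glue vcl ecl eend.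

Lemma closed_pseudo3_ecl_sym s i j : ecl s i j = ecl s j i.
Proof.
have [_ [_ [_ [_ [ecl_class _]]]]] := HM.
have [<- // | ij] := eqVneq i j.
apply/(ecl_class (s, i, j) (s, j, i)) => /=; first exact/eqP.
  by apply/eqP; rewrite eq_sym.
by apply: rst_step; left.
Qed.

Lemma closed_pseudo3_eend s i j : i <> j ->
  eend (ecl s i j) = (vcl s i, vcl s j) \/ eend (ecl s i j) = (vcl s j, vcl s i).
Proof. by have [_ [_ [_ [_ [_ eend_ecl]]]]] := HM; exact: eend_ecl. Qed.

End ClosedPseudo3.

Theorem mainTheorem9 (R : realType) (T V E : finType)
    (glue : T -> 'I_4 -> (T * {perm 'I_4})%type)
    (vcl : T -> 'I_4 -> V) (ecl : T -> 'I_4 -> 'I_4 -> E) (eend : E -> (V * V)%type)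
    (HM : closed_pseudo3 glue vcl ecl eend)
    (Hzero : exists lz : E -> R, forall e : E, gcurv ecl lz e = 0)
    (l0 : E -> R) (w : V -> R) (l0T : E -> R)
    (Hdec : l0 = vact eend w l0T) (HT : in_quot eend l0T) :
  (forall lT : R -> E -> R, ext_ricci_sol ecl lT l0T ->
      (forall t : R, 0 <= t -> in_quot eend (lT t)) /\
      ext_ricci_sol ecl (fun t => vact eend w (lT t)) l0) /\
  (forall l : R -> E -> R, ext_ricci_sol ecl l l0 ->
      exists lT : R -> E -> R, ext_ricci_sol ecl lT l0T /\
        forall t : R, 0 <= t -> l t = vact eend w (lT t)).
Proof.
have ecl_sym := closed_pseudo3_ecl_sym HM.
have eend_ecl := closed_pseudo3_eend HM.
have gcurv_quot := gcurv_in_quot ecl_sym eend_ecl Hzero.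
split=> [lT lT_sol | l l_sol].
  split; first exact: ext_ricci_sol_in_quot gcurv_quot HT lT_sol.
  by rewrite Hdec; exact: (ext_ricci_sol_vact eend_ecl).
exists (fun t => vact eend (fun v => - w v) (l t)).
split=> [|t _]; last by rewrite /= vactNK.
by rewrite -[l0T](vactK eend w) -Hdec; exact: (ext_ricci_sol_vact eend_ecl).
Qed.
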